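(* Let $G$ be a connected $\mathrm{NP}_1$-digital topological group with identity $e$, and let $S$ be the set of points of $G$ adjacent to $e$. Then $S$ generates $G$ as a group, and $G$ is the Cayley graph $\Gamma(G,S)$.
   Context: A digital image is a finite set with a reflexive symmetric adjacency relation (a finite reflexive graph); continuous maps send adjacent points to adjacent points; connected means graph-connected. On $G\times G$, $\mathrm{NP}_1$ declares $(a,b)\sim(c,d)$ iff either $a=c$ and $b\sim d$, or $b=d$ and $a\sim c$. An $\mathrm{NP}_1$-digital topological group is a digital image $G$ with a group structure whose multiplication is $\mathrm{NP}_1$-continuous and whose inversion is continuous. For a finite group $G$ and $S\subseteq G$, the Cayley graph $\Gamma(G,S)$ has vertex set $G$ and $a\sim b$ iff $ab^{-1}\in S$ or $ba^{-1}\in S$. *)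

From mathcomp Require Import all_boot all_fingroup.
Set Implicit Arguments. Unset Strict Implicit. Unset Printing Implicit Defensive.

Definition digital_image (T : finType) (adj : rel T) : Prop :=
  reflexive adj /\ symmetric adj.

Definition dcontinuous (T U : finType) (adjT : rel T) (adjU : rel U)
  (f : T -> U) : Prop :=
  forall x y, adjT x y -> adjU (f x) (f y).

Definition NP1 (T : finType) (adj : rel T) : rel (T * T) :=
  fun p q => ((p.1 == q.1) && adj p.2 q.2) || ((p.2 == q.2) && adj p.1 q.1).

Definition dconnected (T : finType) (adj : rel T) : Prop :=
  forall x y, connect adj x y.

Definition NP1_digital_top_group (gT : finGroupType) (adj : rel gT) : Prop :=
  [/\ digital_image adj,
      dcontinuous (NP1 adj) adj (fun p : gT * gT => (p.1 * p.2)%g)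
    & dcontinuous adj adj (fun x : gT => x^-1)%g].

Definition cayley_adj (gT : finGroupType) (S : {set gT}) : rel gT :=
  fun a b => ((a * b^-1)%g \in S) || ((b * a^-1)%g \in S).

(* In the NP_1 structure, (x, z) ~ (y, z) whenever x ~ y, so continuity of
   multiplication makes adjacency right-invariant.  Translating by a^-1 then
   shows a ~ b iff b a^-1 is a neighbour of 1, which is the Cayley adjacency
   once symmetry is used.  Right-invariance also makes the subgroup generated
   by the neighbours of 1 closed under adjacency, so by connectedness it
   contains every point. *)
From mathcomp Require Import all_boot all_fingroup.

Lemma NP1_mul_adjMr {gT : finGroupType} {adj : rel gT} :
    dcontinuous (NP1 adj) adj (fun p : gT * gT => (p.1 * p.2)%g) ->
  forall x y z, adj x y -> adj (x * z)%g (y * z)%g.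
Proof. by move=> cm x y z xy; apply: (cm (x, z) (y, z)); rewrite /NP1 /= eqxx xy orbT. Qed.

Section RightInvariantAdjacency.

Variables (gT : finGroupType) (adj : rel gT).
Hypothesis adjMr : forall x y z, adj x y -> adj (x * z)%g (y * z)%g.
Hypothesis adj_sym : symmetric adj.

Let S := [set x : gT | adj 1%g x].

Lemma adj_neighbour1E a b : adj a b = ((b * a^-1)%g \in S).
Proof.
rewrite inE; apply/idP/idP => [ab | ba].
  by rewrite -(mulgV a); apply: adjMr.
by rewrite -(mul1g a) -(mulgKV a b); apply: adjMr.
Qed.

Lemma adj_cayley : adj =2 cayley_adj S.
Proof.
by move=> a b; rewrite /cayley_adj -!adj_neighbour1E [adj b a]adj_sym orbb.
Qed.

Lemma closed_gen_neighbours1 : closed adj (mem <<S>>%g).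
Proof.
have gen_step y z : adj y z -> y \in <<S>>%g -> z \in <<S>>%g.
  move=> yz Sy; rewrite -(mulgKV y z) groupM //.
  by rewrite mem_gen // -adj_neighbour1E.
by move=> y z yz; apply/idP/idP; apply: gen_step; rewrite // adj_sym.
Qed.

Lemma connect1_gen_neighbours1 x : connect adj 1%g x -> x \in <<S>>%g.
Proof. by move/(closed_connect closed_gen_neighbours1) <-; apply: group1. Qed.

End RightInvariantAdjacency.

Theorem theoremA (gT : finGroupType) (adj : rel gT) :
  NP1_digital_top_group adj -> dconnected adj ->
  let S := [set x : gT | adj 1%g x] in
  <<S>>%g = [set: gT] /\ adj =2 cayley_adj S.
Proof.
move=> [[_ adj_sym] cm _] conn S.
have adjMr := NP1_mul_adjMr cm.
split; last exact: adj_cayley.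
apply/setP => x; rewrite inE.
exact: connect1_gen_neighbours1 (conn 1%g x).
Qed.
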